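(* Let $\phi\in\,]0,\pi[$, $M\in\mathbb{R}$, $N>0$, and let $\Sigma$ be the Keplerian branch around ${\rm O}$ in the plane ${\rm O}xy$ with equation $r=My+N$. The affine map $(x_1,y_1)\mapsto(x_3,y_3)$ defined by $x_1=x_3-M\frac{\cos\phi}{\sin\phi}y_3-N\cos\phi$, $y_1=\frac{1}{\sin\phi}y_3$ sends any horizontal chord ${\rm A}{\rm B}$ of $\Sigma$ (two distinct points of $\Sigma$ with the same ordinate) onto a horizontal chord ${\rm A}'{\rm B}'$ of the image branch with $\|{\rm A}'{\rm B}'\|=\|{\rm A}{\rm B}\|$ and $\|{\rm O}{\rm A}'\|+\|{\rm O}{\rm B}'\|=\|{\rm O}{\rm A}\|+\|{\rm O}{\rm B}\|$.
   Context: In the Euclidean plane ${\rm O}xy$, $r=\sqrt{x^2+y^2}$. A Keplerian branch around ${\rm O}$ is the image of a solution of Newton's system $\ddot q=-q/\|q\|^3$ (extended through collisions by bouncing back along the same ray). For $\gamma>0$, the set of points satisfying $r=\alpha x+\beta y+\gamma$ is a Keplerian branch around ${\rm O}$; the image of $\Sigma$ by the given map is the Keplerian branch $r=x\cos\phi+yM\sin\phi+N\sin^2\phi$. *)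

From Stdlib Require Import Reals.
Open Scope R_scope.

Definition rad (p : R * R) : R := sqrt (fst p ^ 2 + snd p ^ 2).

Definition dist2 (p q : R * R) : R :=
  sqrt ((fst p - fst q) ^ 2 + (snd p - snd q) ^ 2).

Definition kep_branch (alpha beta gamma : R) (p : R * R) : Prop :=
  rad p = alpha * fst p + beta * snd p + gamma.

(* The affine map (x1,y1) |-> (x3,y3) defined implicitly by
   x1 = x3 - M (cos phi / sin phi) y3 - N cos phi,  y1 = y3 / sin phi,
   i.e. y3 = sin phi * y1 and x3 = x1 + M cos phi y1 + N cos phi. *)
Definition kmap (phi M N : R) (p : R * R) : R * R :=
  (fst p + M * cos phi * snd p + N * cos phi, sin phi * snd p).

(** On the branch [r = M y + N] the map sends [(x, y)] to [(x + r cos phi, y sin phi)],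
    whose distance to O is [r + x cos phi] because [r^2 = x^2 + y^2]; this is
    [cos phi x' + sin phi (M y' + N sin phi)], so the image lies on the new branch.
    A horizontal chord of [r = M y + N] has both ends at the same [r], hence is
    symmetric about the [y]-axis, so the [x cos phi] terms cancel in the sum of focal
    distances; and on each horizontal line the map is a translation. *)

From Stdlib Require Import Reals Lra Psatz.
Open Scope R_scope.

Lemma rad_sqr (p : R * R) : rad p ^ 2 = fst p ^ 2 + snd p ^ 2.
Proof. unfold rad. rewrite pow2_sqrt; nra. Qed.

Lemma Rabs_fst_le_rad (p : R * R) : Rabs (fst p) <= rad p.
Proof.
  unfold rad. rewrite <- sqrt_Rsqr_abs. apply sqrt_le_1_alt.
  unfold Rsqr; nra.
Qed.

Lemma sin_cos_sqr (phi : R) : sin phi ^ 2 + cos phi ^ 2 = 1.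
Proof. rewrite <- (sin2_cos2 phi); unfold Rsqr; ring. Qed.

Section KeplerianMap.

Variables phi M N : R.

Lemma kmap_branch_coords (p : R * R) : kep_branch 0 M N p ->
  kmap phi M N p = (fst p + cos phi * rad p, sin phi * snd p).
Proof.
  unfold kep_branch, kmap; intros Hp. f_equal. rewrite Hp. ring.
Qed.

Lemma rad_kmap_branch (p : R * R) : kep_branch 0 M N p ->
  rad (kmap phi M N p) = cos phi * fst p + rad p.
Proof.
  intros Hp.
  assert (Hr2 := rad_sqr p).
  assert (Hx := Rabs_fst_le_rad p).
  assert (Hs := sin_cos_sqr phi).
  assert (Hc := COS_bound phi).
  assert (Hnonneg : 0 <= cos phi * fst p + rad p).
  { destruct (Rle_or_lt 0 (fst p)).
    - rewrite Rabs_right in Hx by lra. nra.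
    - rewrite Rabs_left in Hx by lra. nra. }
  rewrite kmap_branch_coords by exact Hp.
  unfold rad at 1; cbn [fst snd].
  rewrite <- (sqrt_pow2 _ Hnonneg). f_equal.
  (* [sin^2 y^2 = sin^2 (r^2 - x^2)] turns the square into [(x cos + r)^2] *)
  replace ((sin phi * snd p) ^ 2) with (sin phi ^ 2 * (rad p ^ 2 - fst p ^ 2))
    by (rewrite Hr2; ring).
  replace (sin phi ^ 2) with (1 - cos phi ^ 2) by lra.
  ring.
Qed.

Lemma kmap_image_branch (p : R * R) : kep_branch 0 M N p ->
  kep_branch (cos phi) (M * sin phi) (N * sin phi ^ 2) (kmap phi M N p).
Proof.
  intros Hp. unfold kep_branch.
  rewrite rad_kmap_branch by exact Hp.
  rewrite kmap_branch_coords by exact Hp; cbn [fst snd].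
  assert (Hs := sin_cos_sqr phi).
  unfold kep_branch in Hp.
  replace (rad p) with ((sin phi ^ 2 + cos phi ^ 2) * (M * snd p + N)) at 1
    by (rewrite Hs, Hp; ring).
  rewrite Hp. ring.
Qed.

Lemma kmap_defining_relations (p : R * R) : sin phi <> 0 ->
  fst p = fst (kmap phi M N p) - M * (cos phi / sin phi) * snd (kmap phi M N p)
          - N * cos phi /\
  snd p = / sin phi * snd (kmap phi M N p).
Proof.
  intros Hsin. unfold kmap; cbn [fst snd]. split; field; exact Hsin.
Qed.

Lemma fst_kmap_sub (p q : R * R) : snd p = snd q ->
  fst (kmap phi M N p) - fst (kmap phi M N q) = fst p - fst q.
Proof. unfold kmap; cbn [fst snd]; intros Hy. rewrite Hy. ring. Qed.

Lemma dist2_kmap_horizontal (p q : R * R) : snd p = snd q ->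
  dist2 (kmap phi M N p) (kmap phi M N q) = dist2 p q.
Proof.
  intros Hy. unfold dist2. rewrite fst_kmap_sub by exact Hy.
  unfold kmap; cbn [snd]. rewrite Hy. f_equal. ring.
Qed.

Lemma kmap_neq_horizontal (p q : R * R) : p <> q -> snd p = snd q ->
  kmap phi M N p <> kmap phi M N q.
Proof.
  intros Hne Hy Heq. apply Hne.
  assert (Hx := fst_kmap_sub p q Hy). rewrite Heq in Hx.
  destruct p as [xp yp], q as [xq yq]; cbn [fst snd] in *.
  f_equal; lra.
Qed.

End KeplerianMap.

Lemma horizontal_same_rad_opposite (A B : R * R) :
  A <> B -> snd A = snd B -> rad A = rad B -> fst B = - fst A.
Proof.
  intros Hne Hy Hr.
  assert (Hsq : fst A ^ 2 = fst B ^ 2).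
  { assert (HA := rad_sqr A). assert (HB := rad_sqr B).
    rewrite Hr, Hy in HA. lra. }
  assert (Hx : fst A <> fst B).
  { intros Hx. apply Hne. destruct A, B; cbn in *; congruence. }
  assert (Hprod : (fst A - fst B) * (fst A + fst B) = 0) by nra.
  destruct (Rmult_integral _ _ Hprod); [exfalso; apply Hx|]; lra.
Qed.

Lemma horizontal_chord_opposite (M N : R) (A B : R * R) :
  kep_branch 0 M N A -> kep_branch 0 M N B ->
  A <> B -> snd A = snd B -> fst B = - fst A.
Proof.
  unfold kep_branch; intros HA HB Hne Hy.
  apply horizontal_same_rad_opposite; [exact Hne | exact Hy |].
  rewrite HA, HB, Hy. ring.
Qed.

Theorem lemma8 (phi M N : R) (A B : R * R) :
  0 < phi < PI -> 0 < N ->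
  kep_branch 0 M N A -> kep_branch 0 M N B ->
  A <> B -> snd A = snd B ->
  (* the defining relations of the map, as in the paper *)
  (forall p : R * R,
     fst p = fst (kmap phi M N p) - M * (cos phi / sin phi) * snd (kmap phi M N p)
             - N * cos phi /\
     snd p = / sin phi * snd (kmap phi M N p)) /\
  (* A'B' is a horizontal chord of the image branch *)
  kep_branch (cos phi) (M * sin phi) (N * sin phi ^ 2) (kmap phi M N A) /\
  kep_branch (cos phi) (M * sin phi) (N * sin phi ^ 2) (kmap phi M N B) /\
  kmap phi M N A <> kmap phi M N B /\
  snd (kmap phi M N A) = snd (kmap phi M N B) /\
  (* length and sum of focal distances preserved *)
  dist2 (kmap phi M N A) (kmap phi M N B) = dist2 A B /\
  rad (kmap phi M N A) + rad (kmap phi M N B) = rad A + rad B.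
Proof.
  intros Hphi _ HA HB Hne Hy.
  assert (Hsin : sin phi <> 0) by (apply Rgt_not_eq, sin_gt_0; lra).
  assert (Hopp := horizontal_chord_opposite M N A B HA HB Hne Hy).
  repeat split.
  - apply kmap_defining_relations; exact Hsin.
  - apply kmap_defining_relations; exact Hsin.
  - apply kmap_image_branch; exact HA.
  - apply kmap_image_branch; exact HB.
  - apply kmap_neq_horizontal; assumption.
  - unfold kmap; cbn [snd]. rewrite Hy. reflexivity.
  - apply dist2_kmap_horizontal; exact Hy.
  - rewrite (rad_kmap_branch phi M N A HA), (rad_kmap_branch phi M N B HB), Hopp.
    ring.
Qed.
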